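(* Let $c_q=\gamma\min\big(\frac{\tau_0^2}{2\kappa},\frac{\tau_0}{\kappa_\nabla},\frac{1}{\kappa_{\mathrm{hess}}}\big)$ and suppose $k$ is such that $\|q_k-q^\star\|_2<c_q$. Then $$\mathrm{dist}(\xi,X_k)\le\frac{\kappa_\nabla}{\gamma}\|q_k-q^\star\|_2.$$ Moreover, for each $i\in\{1,\dots,s\}$, letting $B_i=\{x\in\Omega:\|x-\xi_i\|_2\le\tau_0\}$, the set $X_k$ contains at most one point of $B_i$, and $A^*q_k(x)$ has the same (nonzero) sign as $A^*q^\star(\xi_i)$ for all $x\in B_i$.
   Context: Setting: $\Omega\subseteq\mathbb{R}^d$ nonempty open convex; $\mathcal{M}(\Omega)$ finite signed Radon measures with total variation norm $\|\cdot\|_{\mathcal{M}}$, $\mathcal{M}(\Omega')$ those supported in $\Omega'\subseteq\Omega$; $a_1,\dots,a_m\in\mathcal{C}_0(\Omega)\cap\mathcal{C}^2(\Omega)$ with uniformly bounded first and second derivatives; $(A\mu)_i=\int a_i\,d\mu$, $A^*q=\sum_iq_ia_i$. $f:\mathbb{R}^m\to\mathbb{R}$ convex, bounded below, differentiable with $L$-Lipschitz gradient; $f^*$ its conjugate. $J(\mu)=\|\mu\|_{\mathcal{M}}+f(A\mu)$; $(\mathcal{P}(\Omega'))$: $\inf_{\mu\in\mathcal{M}(\Omega')}J(\mu)$; $(\mathcal{D}(\Omega'))$: $\sup\{-f^*(q):|A^*q(x)|\le1\ \forall x\in\Omega'\}$; $(\mathcal{P}),(\mathcal{D})$ for $\Omega'=\Omega$.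 Standing: all these problems used have solutions and no duality gap. Exchange algorithm: given $\Omega_0\subseteq\Omega$, $q_k$ is the solution of $(\mathcal{D}(\Omega_k))$, $X_k$ the set of local maximizers $x\in\Omega$ of $|A^*q_k|$ with $|A^*q_k(x)|>1$, $\Omega_{k+1}=\Omega_k\cup X_k$. For $Y,Z\subseteq\mathbb{R}^d$: $\mathrm{dist}(Y,Z)=\sup_{z\in Z}\inf_{y\in Y}\|y-z\|_2$; for a point $x$, $\mathrm{dist}(x,\xi)=\min_i\|x-\xi_i\|_2$. Constants: $\kappa=\sup_{\|q\|_2\le1}\|A^*q\|_\infty$, $\kappa_\nabla=\sup_{\|q\|_2\le1}\sup_{x}\|\nabla(A^*q)(x)\|_2$, $\kappa_{\mathrm{hess}}=\sup_{\|q\|_2\le1}\sup_x\|\nabla^2(A^*q)(x)\|_{\mathrm{op}}$. Source condition: $(\mathcal{P})$ has a unique solution $\mu^\star=\sum_{i=1}^s\alpha_i^\star\delta_{\xi_i}$ (distinct $\xi_i\in\Omega$, $\alpha_i^\star\ne0$), $\xi=\{\xi_1,\dots,\xi_s\}$; $q^\star$ is the solution of $(\mathcal{D})$; $|A^*q^\star(x)|=1$ iff $x\in\xi$; and there are $\tau_0>0,\gamma>0$ with: for all $x\in\Omega$ with $\mathrm{dist}(x,\xi)\le\tau_0$, $|A^*q^\star(x)|\ge\gamma\tau_0^2/2$ and $\nabla^2|A^*q^\star|(x)\preccurlyeq-\gamma\,\mathrm{Id}$; for all $x\in\Omega$ with $\mathrm{dist}(x,\xi)\ge\tau_0$, $|A^*q^\star(x)|\le1-\gamma\tau_0^2/2$.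 *)

From Stdlib Require Import Reals Lra.
Open Scope R_scope.

(* Points of R^n are represented by functions nat -> R whose coordinates
   of index >= n vanish (predicate [inR n]). *)
Definition pt := nat -> R.

Fixpoint fsum (n : nat) (f : nat -> R) : R :=
  match n with O => 0 | S n' => fsum n' f + f n' end.

Definition inR (n : nat) (x : pt) : Prop := forall i, (n <= i)%nat -> x i = 0.
Definition dot (n : nat) (x y : pt) : R := fsum n (fun i => x i * y i).
Definition norm2 (n : nat) (x : pt) : R := sqrt (dot n x x).
Definition vadd (x y : pt) : pt := fun i => x i + y i.
Definition vsub (x y : pt) : pt := fun i => x i - y i.
Definition vscal (t : R) (x : pt) : pt := fun i => t * x i.
Definition dist_pt (n : nat) (x y : pt) : R := norm2 n (vsub x y).

(* matrices as nat -> pt (row j = H j) *)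
Definition matvec (n : nat) (H : nat -> pt) (v : pt) : pt :=
  fun j => fsum n (fun l => H j l * v l).
Definition quad (n : nat) (H : nat -> pt) (v : pt) : R := dot n v (matvec n H v).

Definition subset_Rd (d : nat) (O : pt -> Prop) : Prop := forall x, O x -> inR d x.
Definition is_open (d : nat) (O : pt -> Prop) : Prop :=
  forall x, O x -> exists r, 0 < r /\ forall y, inR d y -> dist_pt d y x < r -> O y.
Definition is_convex (O : pt -> Prop) : Prop :=
  forall x y t, O x -> O y -> 0 <= t <= 1 -> O (vadd x (vscal t (vsub y x))).
Definition is_compact_Rd (d : nat) (K : pt -> Prop) : Prop :=
  (forall x, K x -> inR d x) /\
  (exists M, forall x, K x -> norm2 d x <= M) /\
  (forall x, inR d x -> (forall r, 0 < r -> exists y, K y /\ dist_pt d y x < r) -> K x).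

Definition cont_on (d : nat) (O : pt -> Prop) (g : pt -> R) : Prop :=
  forall x, O x -> forall eps, 0 < eps -> exists del, 0 < del /\
    forall y, O y -> dist_pt d y x < del -> Rabs (g y - g x) < eps.

(* C_0(O): continuous and vanishing at the boundary / at infinity *)
Definition C0 (d : nat) (O : pt -> Prop) (g : pt -> R) : Prop :=
  cont_on d O g /\
  forall eps, 0 < eps -> exists K, is_compact_Rd d K /\ (forall x, K x -> O x) /\
    forall x, O x -> ~ K x -> Rabs (g x) < eps.

Definition frechet_grad (n : nat) (g : pt -> R) (x G : pt) : Prop :=
  inR n G /\
  forall eps, 0 < eps -> exists del, 0 < del /\
    forall h, inR n h -> norm2 n h < del ->
      Rabs (g (vadd x h) - g x - dot n G h) <= eps * norm2 n h.

Definition has_hessian (n : nat) (g : pt -> R) (x : pt) (H : nat -> pt) : Prop :=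
  exists r (G : pt -> pt), 0 < r /\
    (forall y, inR n y -> dist_pt n y x < r -> frechet_grad n g y (G y)) /\
    (forall j, (j < n)%nat -> frechet_grad n (fun y => G y j) x (H j)).

Definition Astar (m : nat) (a : nat -> pt -> R) (q : pt) (x : pt) : R :=
  fsum m (fun i => q i * a i x).
Definition DAstar (m : nat) (da : nat -> pt -> pt) (q : pt) (x : pt) : pt :=
  fun j => fsum m (fun i => q i * da i x j).
Definition D2Astar (m : nat) (d2a : nat -> pt -> nat -> pt) (q : pt) (x : pt)
  : nat -> pt := fun j l => fsum m (fun i => q i * d2a i x j l).

(* Standing assumptions on a_1..a_m (indexed 0..m-1): in C_0(Omega) and C^2(Omega)
   with gradients da and Hessians d2a, uniformly bounded. *)
Definition a_ok (d m : nat) (Omega : pt -> Prop) (a : nat -> pt -> R)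
  (da : nat -> pt -> pt) (d2a : nat -> pt -> nat -> pt) : Prop :=
  forall i, (i < m)%nat ->
    C0 d Omega (a i) /\
    (forall x, Omega x -> frechet_grad d (a i) x (da i x)) /\
    (forall x, Omega x -> forall j, (j < d)%nat ->
        frechet_grad d (fun y => da i y j) x (d2a i x j)) /\
    (forall j l, (j < d)%nat -> (l < d)%nat -> cont_on d Omega (fun y => d2a i y j l)) /\
    (exists M, forall x, Omega x ->
        norm2 d (da i x) <= M /\
        forall v, inR d v -> norm2 d (matvec d (d2a i x) v) <= M * norm2 d v).

Definition f_ok (m : nat) (f : pt -> R) (L : R) : Prop :=
  (forall y z t, inR m y -> inR m z -> 0 <= t <= 1 ->
     f (vadd y (vscal t (vsub z y))) <= (1 - t) * f y + t * f z) /\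
  (exists b, forall y, inR m y -> b <= f y) /\
  (exists gf : pt -> pt,
     (forall y, inR m y -> frechet_grad m f y (gf y)) /\
     (forall y z, inR m y -> inR m z ->
        norm2 m (vsub (gf y) (gf z)) <= L * norm2 m (vsub y z))).

(* Dual problem (D(Om)): sup { -f^*(q) : |A^*q(x)| <= 1 for all x in Om }. *)
Definition feasible (m : nat) (a : nat -> pt -> R) (Om : pt -> Prop) (q : pt) : Prop :=
  inR m q /\ forall x, Om x -> Rabs (Astar m a q x) <= 1.

(* f^*(q) <= f^*(q') in the extended reals, where
   f^*(q) = sup_{y in R^m} (<q,y> - f y) *)
Definition conj_le (m : nat) (f : pt -> R) (q q' : pt) : Prop :=
  forall y, inR m y -> forall eps, 0 < eps -> exists y', inR m y' /\
    dot m q y - f y <= dot m q' y' - f y' + eps.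

Definition dual_solution (m : nat) (f : pt -> R) (a : nat -> pt -> R)
  (Om : pt -> Prop) (q : pt) : Prop :=
  feasible m a Om q /\ forall q', feasible m a Om q' -> conj_le m f q q'.

Definition Xset (d m : nat) (a : nat -> pt -> R) (Omega : pt -> Prop) (q : pt)
  (x : pt) : Prop :=
  Omega x /\
  (exists r, 0 < r /\ forall y, Omega y -> dist_pt d y x < r ->
      Rabs (Astar m a q y) <= Rabs (Astar m a q x)) /\
  1 < Rabs (Astar m a q x).

(* Exchange algorithm run: Oseq k = Omega_k, q k = q_k *)
Definition exchange_run (d m : nat) (f : pt -> R) (a : nat -> pt -> R)
  (Omega Omega0 : pt -> Prop) (Oseq : nat -> pt -> Prop) (q : nat -> pt) : Prop :=
  (forall x, Oseq O x <-> Omega0 x) /\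
  (forall k x, Oseq (S k) x <-> (Oseq k x \/ Xset d m a Omega (q k) x)) /\
  (forall k, dual_solution m f a (Oseq k) (q k)).

(* t < c_q = gamma * min(tau0^2/(2 kappa), tau0/kappa_grad, 1/kappa_hess),
   with the convention 1/0 = +infinity (written multiplied out). *)
Definition below_cq (gamma tau0 kappa kappa_grad kappa_hess t : R) : Prop :=
  t * (2 * kappa) < gamma * tau0 ^ 2 /\
  t * kappa_grad < gamma * tau0 /\
  t * kappa_hess < gamma.

(* Write g* = A^* q*, g = A^* q_k and sigma_i = g*(xi_i) = +-1.  Since A^* is
   linear in q, g - g* is A^* applied to q_k - q*; its values, gradients and
   Hessians are bounded by kappa, kappa_grad and kappa_hess times |q_k - q*|
   ([homogeneous_bound]).  By the intermediate value theorem on the convex set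
   Omega /\ B_i, sigma_i g* > 0 on B_i, so there the Hessian of |g*| is
   sigma_i times that of g*, and sigma_i hess g* <= -gamma.  Then, for
   |q_k - q*| < c_q:
   - sign: sigma_i g >= gamma tau0^2/2 - kappa |q_k - q*| > 0 on B_i;
   - localization: |g| < 1 outside the balls, so a point z of X_k lies in some
     B_i and grad g(z) = 0; the mean value theorem for the directional
     derivative of sigma_i g* along [xi_i, z], which is <= 0 at xi_i since xi_i
     maximizes sigma_i g* over Omega, gives gamma |z - xi_i| <= kappa_grad |q_k - q*|;
   - uniqueness: along the segment joining two critical points of g in B_i the
     directional derivative of sigma_i g has derivative
     <= (kappa_hess |q_k - q*| - gamma) |y - x|^2 < 0 yet vanishes at both ends. *)

From Stdlib Require Import Reals Lra Lia FunctionalExtensionality Classical.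
Open Scope R_scope.

Ltac pt_ring := apply functional_extensionality; intro;
  unfold vadd, vsub, vscal; ring.

Lemma fsum_ext n f g : (forall i, (i < n)%nat -> f i = g i) -> fsum n f = fsum n g.
Proof.
  induction n as [|n IH]; intros H; simpl; [reflexivity|].
  rewrite IH, (H n); [reflexivity | lia | intros; apply H; lia].
Qed.

Lemma fsum_plus n f g : fsum n (fun i => f i + g i) = fsum n f + fsum n g.
Proof. induction n as [|n IH]; simpl; [lra | rewrite IH; ring]. Qed.

Lemma fsum_minus n f g : fsum n (fun i => f i - g i) = fsum n f - fsum n g.
Proof. induction n as [|n IH]; simpl; [lra | rewrite IH; ring]. Qed.

Lemma fsum_scal n c f : fsum n (fun i => c * f i) = c * fsum n f.
Proof. induction n as [|n IH]; simpl; [lra | rewrite IH; ring]. Qed.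

Lemma fsum_nonneg n f : (forall i, (i < n)%nat -> 0 <= f i) -> 0 <= fsum n f.
Proof.
  induction n as [|n IH]; intros H; simpl; [lra|].
  assert (0 <= fsum n f) by (apply IH; intros; apply H; lia).
  assert (0 <= f n) by (apply H; lia).
  lra.
Qed.

Lemma fsum_nonneg_eq0 n f : (forall i, (i < n)%nat -> 0 <= f i) -> fsum n f = 0 ->
  forall i, (i < n)%nat -> f i = 0.
Proof.
  induction n as [|n IH]; simpl; intros H E i Hi; [lia|].
  assert (0 <= fsum n f) by (apply fsum_nonneg; intros; apply H; lia).
  assert (0 <= f n) by (apply H; lia).
  destruct (Nat.eq_dec i n) as [->|Hne]; [lra|].
  apply IH; [intros; apply H; lia | lra | lia].
Qed.

Lemma dot_comm n x y : dot n x y = dot n y x.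
Proof. unfold dot; apply fsum_ext; intros; ring. Qed.

Lemma dot_scal_l n c x y : dot n (vscal c x) y = c * dot n x y.
Proof. unfold dot, vscal; rewrite <- fsum_scal; apply fsum_ext; intros; ring. Qed.

Lemma dot_scal_r n c x y : dot n x (vscal c y) = c * dot n x y.
Proof. unfold dot, vscal; rewrite <- fsum_scal; apply fsum_ext; intros; ring. Qed.

Lemma dot_add_l n x y z : dot n (vadd x y) z = dot n x z + dot n y z.
Proof. unfold dot, vadd; rewrite <- fsum_plus; apply fsum_ext; intros; ring. Qed.

Lemma dot_add_r n x y z : dot n z (vadd x y) = dot n z x + dot n z y.
Proof. unfold dot, vadd; rewrite <- fsum_plus; apply fsum_ext; intros; ring. Qed.

Lemma dot_sub_l n x y z : dot n (vsub x y) z = dot n x z - dot n y z.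
Proof. unfold dot, vsub; rewrite <- fsum_minus; apply fsum_ext; intros; ring. Qed.

Lemma dot_sub_r n x y z : dot n z (vsub x y) = dot n z x - dot n z y.
Proof. unfold dot, vsub; rewrite <- fsum_minus; apply fsum_ext; intros; ring. Qed.

Lemma dot_pos n x : 0 <= dot n x x.
Proof. unfold dot; apply fsum_nonneg; intros; nra. Qed.

Lemma norm2_nonneg n x : 0 <= norm2 n x.
Proof. apply sqrt_pos. Qed.

Lemma norm2_sq n x : norm2 n x * norm2 n x = dot n x x.
Proof. apply sqrt_sqrt, dot_pos. Qed.

Lemma norm2_scal n c x : norm2 n (vscal c x) = Rabs c * norm2 n x.
Proof.
  unfold norm2; rewrite dot_scal_l, dot_scal_r.
  replace (c * (c * dot n x x)) with (Rsqr c * dot n x x) by (unfold Rsqr; ring).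
  rewrite sqrt_mult_alt by apply Rle_0_sqr.
  now rewrite sqrt_Rsqr_abs.
Qed.

Lemma norm2_eq0 n x : inR n x -> norm2 n x = 0 -> x = (fun _ => 0).
Proof.
  intros Hx H0; apply functional_extensionality; intro i.
  destruct (Nat.lt_ge_cases i n) as [Hi|Hi]; [|now apply Hx].
  assert (Hdot : dot n x x = 0) by (rewrite <- norm2_sq, H0; ring).
  assert (x i * x i = 0)
    by (apply (fsum_nonneg_eq0 n (fun i => x i * x i)); auto; intros; nra).
  nra.
Qed.

Lemma cauchy_schwarz n x y : Rabs (dot n x y) <= norm2 n x * norm2 n y.
Proof.
  set (A := dot n x x); set (B := dot n x y); set (C := dot n y y).
  assert (HBC : B * B <= A * C).
  { destruct (Req_dec C 0) as [HC|HC].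
    - assert (HB : B = 0).
      { unfold B, dot; rewrite (fsum_ext n _ (fun i => 0 * x i)); [rewrite fsum_scal; ring|].
        intros i Hi.
        assert (y i * y i = 0)
          by (apply (fsum_nonneg_eq0 n (fun i => y i * y i)); auto; intros; nra).
        assert (y i = 0) by nra.
        rewrite H0; ring. }
      rewrite HB, HC; lra.
    - assert (HCpos : 0 < C) by (pose proof (dot_pos n y); unfold C in *; lra).
      (* expand |x - (B/C) y|^2 >= 0 *)
      pose proof (dot_pos n (vsub x (vscal (B / C) y))) as P.
      rewrite dot_sub_l, !dot_sub_r, !dot_scal_l, !dot_scal_r, (dot_comm n y x) in P.
      fold A B C in P.
      assert (0 <= (A - B / C * B - (B / C * B - B / C * (B / C * C))) * C) by nra.
      replace ((A - B / C * B - (B / C * B - B / C * (B / C * C))) * C)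
        with (A * C - B * B) in * by (field; lra).
      lra. }
  pose proof (norm2_sq n x); pose proof (norm2_sq n y).
  pose proof (norm2_nonneg n x); pose proof (norm2_nonneg n y).
  apply Rsqr_incr_0_var; [|nra].
  unfold Rsqr; rewrite <- Rabs_mult, Rabs_pos_eq by nra.
  fold A C in H, H0; nra.
Qed.

Lemma norm2_triangle n x y : norm2 n (vadd x y) <= norm2 n x + norm2 n y.
Proof.
  pose proof (norm2_sq n (vadd x y)) as H.
  rewrite dot_add_l, !dot_add_r, (dot_comm n y x) in H.
  pose proof (norm2_sq n x); pose proof (norm2_sq n y).
  pose proof (Rle_abs (dot n x y)); pose proof (cauchy_schwarz n x y).
  pose proof (norm2_nonneg n x); pose proof (norm2_nonneg n y).
  pose proof (norm2_nonneg n (vadd x y)).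
  apply Rsqr_incr_0_var; unfold Rsqr; nra.
Qed.

Lemma dist_pt_sym n x y : dist_pt n x y = dist_pt n y x.
Proof.
  unfold dist_pt; replace (vsub x y) with (vscal (-1) (vsub y x)) by pt_ring.
  rewrite norm2_scal, Rabs_left by lra; ring.
Qed.

Lemma dist_pt_refl n x : dist_pt n x x = 0.
Proof.
  unfold dist_pt; replace (vsub x x) with (vscal 0 x) by pt_ring.
  rewrite norm2_scal, Rabs_R0; ring.
Qed.

Lemma inR_vadd n x y : inR n x -> inR n y -> inR n (vadd x y).
Proof. intros Hx Hy i Hi; unfold vadd; rewrite Hx, Hy; auto; ring. Qed.

Lemma inR_vsub n x y : inR n x -> inR n y -> inR n (vsub x y).
Proof. intros Hx Hy i Hi; unfold vsub; rewrite Hx, Hy; auto; ring. Qed.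

Lemma inR_vscal n c x : inR n x -> inR n (vscal c x).
Proof. intros Hx i Hi; unfold vscal; rewrite Hx; auto; ring. Qed.

Definition seg (x y : pt) (t : R) : pt := vadd x (vscal t (vsub y x)).

Lemma line_0 x v : vadd x (vscal 0 v) = x.
Proof. pt_ring. Qed.

Lemma seg_1 x y : seg x y 1 = y.
Proof. unfold seg; pt_ring. Qed.

Lemma seg_in_ball n x y c r t : dist_pt n x c <= r -> dist_pt n y c <= r -> 0 <= t <= 1 ->
  dist_pt n (seg x y t) c <= r.
Proof.
  unfold dist_pt; intros Hx Hy Ht.
  replace (vsub (seg x y t) c) with (vadd (vscal (1 - t) (vsub x c)) (vscal t (vsub y c)))
    by (unfold seg; pt_ring).
  eapply Rle_trans; [apply norm2_triangle|].
  rewrite !norm2_scal, !Rabs_pos_eq by lra.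
  nra.
Qed.

Lemma shrink_lt e u : 0 < e -> 0 <= u -> e / (u + 1) * u < e.
Proof.
  intros He Hu; replace (e / (u + 1) * u) with (e - e / (u + 1)) by (field; lra).
  assert (0 < e / (u + 1)) by (apply Rdiv_lt_0_compat; lra).
  lra.
Qed.

Lemma small_step e u t : 0 < e -> 0 <= u -> Rabs t < e / (u + 1) -> Rabs t * u < e.
Proof.
  intros He Hu Ht; pose proof (shrink_lt e u He Hu); pose proof (Rabs_pos t).
  assert (Rabs t * u <= e / (u + 1) * u) by (apply Rmult_le_compat_r; lra).
  lra.
Qed.

Lemma line_point_near n y v rho t : inR n y -> inR n v -> 0 < rho ->
  Rabs t < rho / (norm2 n v + 1) ->
  inR n (vadd y (vscal t v)) /\ dist_pt n (vadd y (vscal t v)) y < rho.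
Proof.
  intros Hy Hv Hrho Ht; split; [apply inR_vadd, inR_vscal; auto|].
  unfold dist_pt; replace (vsub (vadd y (vscal t v)) y) with (vscal t v) by pt_ring.
  rewrite norm2_scal; apply small_step; auto using norm2_nonneg.
Qed.

Lemma unit_sign_sq sg : Rabs sg = 1 -> sg * sg = 1.
Proof. intros H; rewrite <- (Rabs_pos_eq (sg * sg)) by nra; rewrite Rabs_mult, H; ring. Qed.

Lemma unit_sign_le sg w : Rabs sg = 1 -> sg * w <= Rabs w.
Proof. intros H; pose proof (Rle_abs (sg * w)); rewrite Rabs_mult, H in *; lra. Qed.

Lemma pos_product_cases u w : 0 < u * w -> (0 < u /\ 0 < w) \/ (u < 0 /\ w < 0).
Proof.
  intros H; destruct (Rlt_le_dec 0 u) as [Hu|Hu]; [left | right]; split; auto; try nra.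
  destruct Hu as [Hu|Hu]; [auto | subst; lra].
Qed.

Lemma le_div_of_sq g u K : 0 < g -> 0 <= u -> 0 <= K -> g * (u * u) <= K * u -> u <= K / g.
Proof.
  intros Hg Hu HK Hq; apply Rmult_le_reg_l with g; auto.
  replace (g * (K / g)) with K by (field; lra).
  destruct (Req_dec u 0) as [->|Hu0]; [lra|].
  apply Rmult_le_reg_r with u; [lra | nra].
Qed.

Lemma frechet_add n g1 g2 y G1 G2 : frechet_grad n g1 y G1 -> frechet_grad n g2 y G2 ->
  frechet_grad n (fun z => g1 z + g2 z) y (vadd G1 G2).
Proof.
  intros [HG1 H1] [HG2 H2]; split; [now apply inR_vadd|].
  intros eps He.
  destruct (H1 (eps / 2)) as [d1 [Hd1 P1]]; [lra|].
  destruct (H2 (eps / 2)) as [d2 [Hd2 P2]]; [lra|].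
  exists (Rmin d1 d2); split; [now apply Rmin_glb_lt|].
  intros h Hh Hn; pose proof (Rmin_l d1 d2); pose proof (Rmin_r d1 d2).
  specialize (P1 h Hh ltac:(lra)); specialize (P2 h Hh ltac:(lra)).
  rewrite dot_add_l.
  replace (g1 (vadd y h) + g2 (vadd y h) - (g1 y + g2 y) - (dot n G1 h + dot n G2 h))
    with ((g1 (vadd y h) - g1 y - dot n G1 h) + (g2 (vadd y h) - g2 y - dot n G2 h))
    by ring.
  eapply Rle_trans; [apply Rabs_triang | lra].
Qed.

Lemma frechet_scal n c g y G : frechet_grad n g y G ->
  frechet_grad n (fun z => c * g z) y (vscal c G).
Proof.
  intros [HG H1]; split; [now apply inR_vscal|].
  intros eps He; pose proof (Rabs_pos c).
  destruct (H1 (eps / (Rabs c + 1))) as [d1 [Hd1 P1]]; [apply Rdiv_lt_0_compat; lra|].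
  exists d1; split; auto; intros h Hh Hn; specialize (P1 h Hh Hn).
  rewrite dot_scal_l.
  replace (c * g (vadd y h) - c * g y - c * dot n G h)
    with (c * (g (vadd y h) - g y - dot n G h)) by ring.
  rewrite Rabs_mult.
  pose proof (shrink_lt eps (Rabs c) He (Rabs_pos c)); pose proof (norm2_nonneg n h).
  apply Rle_trans with (Rabs c * (eps / (Rabs c + 1) * norm2 n h));
    [apply Rmult_le_compat_l; auto | nra].
Qed.

Lemma frechet_fsum n m (c : nat -> R) (g : nat -> pt -> R) (G : nat -> pt) y :
  (forall i, (i < m)%nat -> frechet_grad n (g i) y (G i)) ->
  frechet_grad n (fun z => fsum m (fun i => c i * g i z)) y
                 (fun l => fsum m (fun i => c i * G i l)).
Proof.
  induction m as [|m IH]; intros H; simpl.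
  - split; [now intros i _|].
    intros eps He; exists 1; split; [lra|]; intros h _ _.
    unfold dot; rewrite fsum_scal, Rmult_0_l, !Rminus_0_r, Rabs_R0.
    pose proof (norm2_nonneg n h); nra.
  - apply (frechet_add n _ _ y _ (vscal (c m) (G m)));
      [apply IH; intros; apply H; lia | apply frechet_scal, H; lia].
Qed.

Lemma frechet_continuous n g y G : frechet_grad n g y G ->
  forall eps, 0 < eps -> exists del, 0 < del /\
    forall h, inR n h -> norm2 n h < del -> Rabs (g (vadd y h) - g y) < eps.
Proof.
  intros [HG H1] eps He; destruct (H1 1) as [d1 [Hd1 P1]]; [lra|].
  pose proof (norm2_nonneg n G).
  exists (Rmin d1 (eps / (norm2 n G + 1))); split;
    [apply Rmin_glb_lt; auto; apply Rdiv_lt_0_compat; lra|].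
  intros h Hh Hn; pose proof (Rmin_l d1 (eps / (norm2 n G + 1))).
  pose proof (Rmin_r d1 (eps / (norm2 n G + 1))).
  specialize (P1 h Hh ltac:(lra)).
  pose proof (cauchy_schwarz n G h); pose proof (norm2_nonneg n h).
  assert (norm2 n h * (norm2 n G + 1) < eps).
  { replace eps with (eps / (norm2 n G + 1) * (norm2 n G + 1)) by (field; lra).
    apply Rmult_lt_compat_r; lra. }
  replace (g (vadd y h) - g y) with ((g (vadd y h) - g y - dot n G h) + dot n G h) by ring.
  eapply Rle_lt_trans; [apply Rabs_triang | nra].
Qed.

Lemma frechet_line_deriv n g x v t0 G : frechet_grad n g (vadd x (vscal t0 v)) G ->
  inR n v -> derivable_pt_lim (fun t => g (vadd x (vscal t v))) t0 (dot n G v).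
Proof.
  intros [HG Hg] Hv eps He; set (y := vadd x (vscal t0 v)).
  pose proof (norm2_nonneg n v) as Hnv.
  destruct (Hg (eps / (norm2 n v + 1))) as [del [Hdel Hsmall]];
    [apply Rdiv_lt_0_compat; lra|].
  assert (Hp : 0 < del / (norm2 n v + 1)) by (apply Rdiv_lt_0_compat; lra).
  exists (mkposreal _ Hp); simpl; intros h Hh0 Hh.
  replace (vadd x (vscal (t0 + h) v)) with (vadd y (vscal h v)) by (unfold y; pt_ring).
  specialize (Hsmall _ (inR_vscal n h v Hv)
                ltac:(rewrite norm2_scal; now apply small_step)).
  rewrite dot_scal_r, norm2_scal in Hsmall; fold y in Hsmall.
  assert (Hah : 0 < Rabs h) by now apply Rabs_pos_lt.
  replace ((g (vadd y (vscal h v)) - g y) / h - dot n G v)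
    with ((g (vadd y (vscal h v)) - g y - h * dot n G v) * / h) by (field; auto).
  rewrite Rabs_mult, Rabs_inv.
  apply Rmult_lt_reg_r with (Rabs h); auto.
  rewrite Rmult_assoc, Rinv_l, Rmult_1_r by lra.
  pose proof (Rmult_lt_compat_l _ _ _ Hah (shrink_lt eps (norm2 n v) He Hnv)).
  replace (eps / (norm2 n v + 1) * (Rabs h * norm2 n v))
    with (Rabs h * (eps / (norm2 n v + 1) * norm2 n v)) in Hsmall by ring.
  rewrite (Rmult_comm eps); lra.
Qed.

Lemma small_pos (del : posreal) r : 0 < r -> exists h, 0 < h /\ h < del /\ h < r.
Proof.
  intros Hr; pose proof (cond_pos del); exists (Rmin del r / 2).
  pose proof (Rmin_l del r); pose proof (Rmin_r del r).
  assert (0 < Rmin del r) by (apply Rmin_glb_lt; lra).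
  lra.
Qed.

Lemma deriv_nonpos_right_max f l : derivable_pt_lim f 0 l ->
  (exists r, 0 < r /\ forall t, 0 < t < r -> f t <= f 0) -> l <= 0.
Proof.
  intros Hd [r [Hr Hmax]]; apply Rnot_lt_le; intro Hl.
  destruct (Hd (l / 2)) as [del Hdel]; [lra|].
  destruct (small_pos del r Hr) as [h [Hh0 [Hhdel Hhr]]].
  specialize (Hdel h ltac:(lra) ltac:(rewrite Rabs_pos_eq; lra)).
  rewrite Rplus_0_l in Hdel; specialize (Hmax h (conj Hh0 Hhr)).
  assert ((f h - f 0) / h <= 0)
    by (unfold Rdiv; pose proof (Rinv_0_lt_compat h Hh0); nra).
  apply Rabs_def2 in Hdel; lra.
Qed.

Lemma deriv_zero_local_max f l : derivable_pt_lim f 0 l ->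
  (exists r, 0 < r /\ forall t, Rabs t < r -> f t <= f 0) -> l = 0.
Proof.
  intros Hd [r [Hr Hmax]].
  assert (Hle : l <= 0).
  { apply (deriv_nonpos_right_max f); auto; exists r; split; auto.
    intros t Ht; apply Hmax; rewrite Rabs_pos_eq; lra. }
  assert (Hrefl : derivable_pt_lim (comp f (- id)%F) 0 (l * -1)).
  { apply derivable_pt_lim_comp; [apply derivable_pt_lim_opp, derivable_pt_lim_id|].
    unfold opp_fct, id; now rewrite Ropp_0. }
  assert (Hge : l * -1 <= 0).
  { apply (deriv_nonpos_right_max _ _ Hrefl); exists r; split; auto.
    intros t Ht; unfold comp, opp_fct, id; rewrite Ropp_0.
    apply Hmax; rewrite Rabs_Ropp, Rabs_pos_eq; lra. }
  lra.
Qed.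

Lemma deriv_unique_local f g t0 l1 l2 :
  derivable_pt_lim f t0 l1 -> derivable_pt_lim g t0 l2 ->
  (exists e, 0 < e /\ forall t, Rabs (t - t0) < e -> f t = g t) -> l1 = l2.
Proof.
  intros Hf Hg [e [He Heq]].
  apply (uniqueness_limite f t0 l1 l2 Hf).
  intros eps Heps; destruct (Hg eps Heps) as [del Hdel].
  exists (mkposreal _ (Rmin_pos _ _ (cond_pos del) He)); simpl; intros h Hh0 Hh.
  pose proof (Rmin_l del e); pose proof (Rmin_r del e).
  rewrite (Heq (t0 + h)), (Heq t0);
    [apply Hdel; auto; lra | rewrite Rminus_diag, Rabs_R0 | replace (t0 + h - t0) with h by ring];
    lra.
Qed.

Lemma deriv_fsum n (F : nat -> R -> R) (l c : nat -> R) t :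
  (forall j, (j < n)%nat -> derivable_pt_lim (F j) t (l j)) ->
  derivable_pt_lim (fun u => fsum n (fun j => F j u * c j)) t (fsum n (fun j => l j * c j)).
Proof.
  induction n as [|n IH]; intros H; simpl; [apply (derivable_pt_lim_const 0)|].
  apply (derivable_pt_lim_plus (fun u => fsum n (fun j => F j u * c j))
                               (fun u => F n u * c n));
    [apply IH; intros; apply H; lia|].
  replace (l n * c n) with (l n * fct_cte (c n) t + F n t * 0) by (unfold fct_cte; ring).
  apply (derivable_pt_lim_mult (F n) (fct_cte (c n)));
    [apply H; lia | apply derivable_pt_lim_const].
Qed.

Lemma Astar_sub m a p1 p2 x : Astar m a (vsub p1 p2) x = Astar m a p1 x - Astar m a p2 x.
Proof. unfold Astar, vsub; rewrite <- fsum_minus; apply fsum_ext; intros; ring. Qed.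

Lemma DAstar_sub m da p1 p2 x :
  DAstar m da (vsub p1 p2) x = vsub (DAstar m da p1 x) (DAstar m da p2 x).
Proof.
  apply functional_extensionality; intro j; unfold DAstar, vsub.
  rewrite <- fsum_minus; apply fsum_ext; intros; ring.
Qed.

Lemma D2Astar_sub m d2a p1 p2 x :
  D2Astar m d2a (vsub p1 p2) x = fun j => vsub (D2Astar m d2a p1 x j) (D2Astar m d2a p2 x j).
Proof.
  do 2 (apply functional_extensionality; intro); unfold D2Astar, vsub.
  rewrite <- fsum_minus; apply fsum_ext; intros; ring.
Qed.

Lemma quad_sub n H1 H2 v :
  quad n (fun j => vsub (H1 j) (H2 j)) v = quad n H1 v - quad n H2 v.
Proof.
  unfold quad; rewrite <- dot_sub_r; f_equal.
  apply functional_extensionality; intro j; unfold matvec, vsub.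
  rewrite <- fsum_minus; apply fsum_ext; intros; ring.
Qed.

Lemma Astar_scal m a c p x : Astar m a (vscal c p) x = c * Astar m a p x.
Proof. unfold Astar, vscal; rewrite <- fsum_scal; apply fsum_ext; intros; ring. Qed.

Lemma DAstar_scal m da c p x : DAstar m da (vscal c p) x = vscal c (DAstar m da p x).
Proof.
  apply functional_extensionality; intro j; unfold DAstar, vscal.
  rewrite <- fsum_scal; apply fsum_ext; intros; ring.
Qed.

Lemma matvec_D2Astar_scal n m d2a c p x v :
  matvec n (D2Astar m d2a (vscal c p) x) v = vscal c (matvec n (D2Astar m d2a p x) v).
Proof.
  apply functional_extensionality; intro j; unfold matvec, D2Astar, vscal.
  rewrite <- fsum_scal; apply fsum_ext; intros.
  rewrite <- Rmult_assoc, <- fsum_scal; f_equal; apply fsum_ext; intros; ring.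
Qed.

Lemma matvec_scal n H c v : matvec n H (vscal c v) = vscal c (matvec n H v).
Proof.
  apply functional_extensionality; intro j; unfold matvec, vscal.
  rewrite <- fsum_scal; apply fsum_ext; intros; ring.
Qed.

(* A positively homogeneous functional bounded by [K] on the unit ball is
   bounded by [K |p|]; this turns the suprema kappa into operator norms. *)
Lemma homogeneous_bound n (N : pt -> R) K :
  (forall c p, N (vscal c p) = Rabs c * N p) ->
  (forall p, inR n p -> norm2 n p <= 1 -> N p <= K) ->
  forall p, inR n p -> N p <= K * norm2 n p.
Proof.
  intros Hhom Hball p Hp; pose proof (norm2_nonneg n p).
  destruct (Req_dec (norm2 n p) 0) as [H0|H0].
  - (* all multiples of [p] lie in the unit ball, so [N p <= 0] *)
    rewrite H0, Rmult_0_r; apply Rnot_lt_le; intro Hpos.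
    set (c := (Rabs K + 1) / N p).
    assert (Hc : 0 < c) by (apply Rdiv_lt_0_compat; pose proof (Rabs_pos K); lra).
    pose proof (Hball (vscal c p) (inR_vscal n c p Hp)) as B.
    rewrite norm2_scal, H0, Hhom, Rabs_pos_eq in B by lra.
    replace (c * N p) with (Rabs K + 1) in B by (unfold c; field; lra).
    pose proof (Rle_abs K); pose proof (B ltac:(lra)); lra.
  - set (c := / norm2 n p).
    assert (Hc : 0 < c) by (apply Rinv_0_lt_compat; lra).
    pose proof (Hball (vscal c p) (inR_vscal n c p Hp)) as B.
    rewrite norm2_scal, Hhom, Rabs_pos_eq in B by lra.
    replace (c * norm2 n p) with 1 in B by (unfold c; field; lra).
    apply Rmult_le_reg_l with c; auto.
    replace (c * (K * norm2 n p)) with K by (unfold c; field; lra).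
    now apply B.
Qed.

Lemma Astar_bound m a (Om : pt -> Prop) kappa :
  is_upper_bound (fun r => exists q x, inR m q /\ norm2 m q <= 1 /\ Om x /\
                    r = Rabs (Astar m a q x)) kappa ->
  forall p x, inR m p -> Om x -> Rabs (Astar m a p x) <= kappa * norm2 m p.
Proof.
  intros Hub p x Hp Hx.
  apply (homogeneous_bound m (fun p => Rabs (Astar m a p x))); auto.
  - intros c q; now rewrite Astar_scal, Rabs_mult.
  - intros q Hq Hn; apply Hub; now exists q, x.
Qed.

Lemma DAstar_bound d m da (Om : pt -> Prop) kappa_grad :
  is_upper_bound (fun r => exists q x, inR m q /\ norm2 m q <= 1 /\ Om x /\
                    r = norm2 d (DAstar m da q x)) kappa_grad ->
  forall p x, inR m p -> Om x -> norm2 d (DAstar m da p x) <= kappa_grad * norm2 m p.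
Proof.
  intros Hub p x Hp Hx.
  apply (homogeneous_bound m (fun p => norm2 d (DAstar m da p x))); auto.
  - intros c q; now rewrite DAstar_scal, norm2_scal.
  - intros q Hq Hn; apply Hub; now exists q, x.
Qed.

Lemma D2Astar_quad_bound d m d2a (Om : pt -> Prop) kappa_hess :
  is_upper_bound (fun r => exists q x v, inR m q /\ norm2 m q <= 1 /\ Om x /\
                    inR d v /\ norm2 d v <= 1 /\
                    r = norm2 d (matvec d (D2Astar m d2a q x) v)) kappa_hess ->
  forall p x v, inR m p -> Om x -> inR d v ->
    Rabs (quad d (D2Astar m d2a p x) v) <= kappa_hess * norm2 m p * (norm2 d v * norm2 d v).
Proof.
  intros Hub p x v Hp Hx Hv.
  assert (Hmv : norm2 d (matvec d (D2Astar m d2a p x) v) <= kappa_hess * norm2 m p * norm2 d v).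
  { apply (homogeneous_bound d (fun v => norm2 d (matvec d (D2Astar m d2a p x) v))); auto.
    - intros c w; now rewrite matvec_scal, norm2_scal.
    - intros w Hw Hnw.
      apply (homogeneous_bound m (fun p => norm2 d (matvec d (D2Astar m d2a p x) w))); auto.
      + intros c q; now rewrite matvec_D2Astar_scal, norm2_scal.
      + intros q Hq Hn; apply Hub; exists q, x, w; repeat split; auto. }
  unfold quad; eapply Rle_trans; [apply cauchy_schwarz|].
  pose proof (norm2_nonneg d v); nra.
Qed.

(* Clamping to [0, 1] extends a path defined on the unit interval to R. *)
Definition clamp (t : R) : R := Rmax 0 (Rmin 1 t).

Lemma clamp_in t : 0 <= clamp t <= 1.
Proof. unfold clamp, Rmax, Rmin; repeat destruct Rle_dec; lra. Qed.

Lemma clamp_lipschitz t u : Rabs (clamp t - clamp u) <= Rabs (t - u).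
Proof. unfold clamp, Rmax, Rmin; repeat destruct Rle_dec; unfold Rabs; repeat destruct Rcase_abs; lra. Qed.

Lemma clamp_id t : 0 <= t <= 1 -> clamp t = t.
Proof. unfold clamp, Rmax, Rmin; repeat destruct Rle_dec; lra. Qed.

Section DualCertificate.

Variables (d m : nat) (Om : pt -> Prop) (a : nat -> pt -> R)
  (da : nat -> pt -> pt) (d2a : nat -> pt -> nat -> pt).
Hypothesis Ha : a_ok d m Om a da d2a.
Hypothesis HOmsub : subset_Rd d Om.
Hypothesis HOmopen : is_open d Om.
Hypothesis HOmconv : is_convex Om.

Lemma Astar_grad p y : Om y -> frechet_grad d (Astar m a p) y (DAstar m da p y).
Proof.
  intros Hy; apply (frechet_fsum d m p a (fun i => da i y)).
  intros i Hi; now apply (Ha i Hi).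
Qed.

Lemma DAstar_grad p y j : Om y -> (j < d)%nat ->
  frechet_grad d (fun z => DAstar m da p z j) y (D2Astar m d2a p y j).
Proof.
  intros Hy Hj; apply (frechet_fsum d m p (fun i z => da i z j) (fun i => d2a i y j)).
  intros i Hi; now apply (Ha i Hi).
Qed.

Lemma Astar_line_deriv p x v t0 : Om (vadd x (vscal t0 v)) -> inR d v ->
  derivable_pt_lim (fun t => Astar m a p (vadd x (vscal t v))) t0
    (dot d (DAstar m da p (vadd x (vscal t0 v))) v).
Proof. intros; apply frechet_line_deriv; auto; now apply Astar_grad. Qed.

Lemma DAstar_line_deriv p x v t0 : Om (vadd x (vscal t0 v)) -> inR d v ->
  derivable_pt_lim (fun t => dot d (DAstar m da p (vadd x (vscal t v))) v) t0
    (quad d (D2Astar m d2a p (vadd x (vscal t0 v))) v).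
Proof.
  intros Ht0 Hv.
  replace (quad d (D2Astar m d2a p (vadd x (vscal t0 v))) v)
    with (fsum d (fun j => dot d (D2Astar m d2a p (vadd x (vscal t0 v)) j) v * v j))
    by (unfold quad, dot at 2, matvec; apply fsum_ext; intros; unfold dot; ring).
  apply (deriv_fsum d (fun j t => DAstar m da p (vadd x (vscal t v)) j)).
  intros j Hj; apply (frechet_line_deriv d (fun z => DAstar m da p z j)); auto.
  now apply DAstar_grad.
Qed.

Lemma grad_increment_mvt p x y : Om x -> Om y ->
  exists c, 0 < c < 1 /\
    dot d (DAstar m da p y) (vsub y x) - dot d (DAstar m da p x) (vsub y x)
    = quad d (D2Astar m d2a p (seg x y c)) (vsub y x).
Proof.
  intros Hx Hy.
  destruct (MVT_cor2 (fun t => dot d (DAstar m da p (seg x y t)) (vsub y x))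
              (fun c => quad d (D2Astar m d2a p (seg x y c)) (vsub y x)) 0 1)
    as [c [Hc Hc01]]; [lra| |].
  - intros c Hc; apply DAstar_line_deriv; [now apply HOmconv|].
    apply inR_vsub; auto.
  - exists c; split; auto.
    rewrite seg_1 in Hc; unfold seg in *; rewrite line_0 in Hc; rewrite Hc; ring.
Qed.

Lemma first_order_max p sg x0 y : Om x0 -> Om y ->
  (forall z, Om z -> sg * Astar m a p z <= sg * Astar m a p x0) ->
  sg * dot d (DAstar m da p x0) (vsub y x0) <= 0.
Proof.
  intros Hx0 Hy Hmax.
  assert (Hd := derivable_pt_lim_scal _ sg 0 _
                  (Astar_line_deriv p x0 (vsub y x0) 0
                     ltac:(rewrite line_0; auto) ltac:(apply inR_vsub; auto))).
  rewrite line_0 in Hd.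
  apply (deriv_nonpos_right_max _ _ Hd); exists 1; split; [lra|].
  intros t Ht; unfold mult_real_fct; rewrite line_0.
  apply Hmax, HOmconv; auto; lra.
Qed.

Lemma grad_zero_at_local_max p z v : Om z ->
  (exists r, 0 < r /\ forall y, Om y -> dist_pt d y z < r ->
     Rabs (Astar m a p y) <= Rabs (Astar m a p z)) ->
  inR d v -> dot d (DAstar m da p z) v = 0.
Proof.
  intros Hz [r2 [Hr2 Hmax]] Hv; destruct (HOmopen z Hz) as [r1 [Hr1 Hball]].
  set (chi := fun t => Astar m a p (vadd z (vscal t v))).
  pose proof (Astar_line_deriv p z v 0 ltac:(rewrite line_0; auto) Hv) as D0.
  rewrite line_0 in D0; fold chi in D0.
  assert (Hc0 : chi 0 = Astar m a p z) by (unfold chi; now rewrite line_0).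
  set (rho := Rmin r1 r2 / (norm2 d v + 1)).
  assert (Hrho : 0 < rho)
    by (apply Rdiv_lt_0_compat; [apply Rmin_glb_lt | pose proof (norm2_nonneg d v)]; lra).
  assert (Hloc : forall t, Rabs t < rho -> Rabs (chi t) <= Rabs (chi 0)).
  { intros t Ht; rewrite Hc0.
    destruct (line_point_near d z v (Rmin r1 r2) t (HOmsub z Hz) Hv
                ltac:(apply Rmin_glb_lt; lra) Ht) as [Hin Hd].
    pose proof (Rmin_l r1 r2); pose proof (Rmin_r r1 r2).
    apply Hmax; [apply Hball; auto|]; lra. }
  destruct (Rle_lt_dec 0 (Astar m a p z)) as [Hpos|Hneg].
  - apply (deriv_zero_local_max chi); auto; exists rho; split; auto.
    intros t Ht; specialize (Hloc t Ht).
    rewrite Hc0, (Rabs_pos_eq (Astar m a p z)) in Hloc by lra.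
    rewrite Hc0; pose proof (Rle_abs (chi t)); lra.
  - enough (- dot d (DAstar m da p z) v = 0) by lra.
    apply (deriv_zero_local_max (- chi)%F); [now apply derivable_pt_lim_opp|].
    exists rho; split; auto; intros t Ht; specialize (Hloc t Ht).
    rewrite Hc0, (Rabs_left (Astar m a p z)) in Hloc by lra.
    unfold opp_fct; rewrite Hc0; pose proof (Rle_abs (- chi t)).
    rewrite Rabs_Ropp in *; lra.
Qed.

Lemma Astar_clamped_seg_continuous p x y : Om x -> Om y ->
  continuity (fun t => Astar m a p (seg x y (clamp t))).
Proof.
  intros Hx Hy t eps He; set (v := vsub y x).
  assert (Hv : inR d v) by (apply inR_vsub; auto).
  assert (Hseg : forall t, Om (seg x y (clamp t))) by (intro; apply HOmconv, clamp_in; auto).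
  destruct (frechet_continuous d _ _ _ (Astar_grad p _ (Hseg t)) eps He) as [del [Hdel Hcont]].
  pose proof (norm2_nonneg d v).
  exists (del / (norm2 d v + 1)); split; [apply Rdiv_lt_0_compat; lra|].
  intros t' [_ Ht']; simpl in Ht'; unfold R_dist in *; simpl.
  replace (seg x y (clamp t')) with (vadd (seg x y (clamp t)) (vscal (clamp t' - clamp t) v))
    by (unfold seg, v; pt_ring).
  apply Hcont; [now apply inR_vscal|].
  rewrite norm2_scal; apply small_step; auto.
  eapply Rle_lt_trans; [apply clamp_lipschitz | exact Ht'].
Qed.

(* Intermediate value theorem: if [A^* p] has no zero in the convex set
   [Om /\ B(x0, tau)], it keeps the sign of [A^* p (x0)] there. *)
Lemma Astar_sign_constant p x0 tau : Om x0 ->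
  (forall z, Om z -> dist_pt d z x0 <= tau -> Astar m a p z <> 0) ->
  forall y, Om y -> dist_pt d y x0 <= tau -> 0 < Astar m a p x0 * Astar m a p y.
Proof.
  intros Hx0 Hnz y Hy Hdy; set (g := Astar m a p).
  assert (Hd0 : dist_pt d x0 x0 <= tau)
    by (rewrite dist_pt_refl; pose proof (norm2_nonneg d (vsub y x0)); unfold dist_pt in *; lra).
  assert (Hg0 : g x0 <> 0) by now apply Hnz.
  assert (Hgy : g y <> 0) by now apply Hnz.
  apply Rnot_le_lt; intro Hle.
  assert (Hneg : g x0 * g y < 0)
    by (destruct Hle as [|E]; auto; apply Rmult_integral in E; tauto).
  set (phi := fun t => - (g x0 * g (seg x0 y (clamp t)))).
  assert (Hphi : continuity phi).
  { apply (continuity_opp (fun t => g x0 * g (seg x0 y (clamp t)))).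
    apply (continuity_scal (fun t => g (seg x0 y (clamp t)))).
    now apply Astar_clamped_seg_continuous. }
  destruct (IVT phi 0 1 Hphi ltac:(lra)) as [c [Hc Hphic]];
    unfold phi; rewrite ?clamp_id, ?seg_1 by lra.
  - unfold seg; rewrite line_0.
    assert (0 < g x0 * g x0) by (apply Rsqr_pos_lt; auto). lra.
  - lra.
  - assert (Hzero : g x0 * g (seg x0 y (clamp c)) = 0) by (unfold phi in Hphic; lra).
    apply (Hnz (seg x0 y (clamp c)));
      [apply HOmconv, clamp_in; auto | apply seg_in_ball; auto; apply clamp_in |].
    destruct (Rmult_integral _ _ Hzero); [contradiction | auto].
Qed.

Lemma abs_Astar_near p y sg : Om y -> Rabs sg = 1 -> 0 < sg * Astar m a p y ->
  exists rho, 0 < rho /\ forall z, inR d z -> dist_pt d z y < rho ->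
    Om z /\ Rabs (Astar m a p z) = sg * Astar m a p z.
Proof.
  intros Hy Hsg Hpos; destruct (HOmopen y Hy) as [r1 [Hr1 Hball]].
  destruct (frechet_continuous d _ _ _ (Astar_grad p y Hy) _ Hpos) as [del [Hdel Hcont]].
  exists (Rmin r1 del); split; [now apply Rmin_glb_lt|].
  intros z Hz Hdz; pose proof (Rmin_l r1 del); pose proof (Rmin_r r1 del).
  split; [apply Hball; auto; lra|].
  specialize (Hcont (vsub z y) (inR_vsub _ _ _ Hz (HOmsub y Hy))
                ltac:(unfold dist_pt in Hdz; lra)).
  replace (vadd y (vsub z y)) with z in Hcont by pt_ring.
  assert (Hclose : Rabs (sg * (Astar m a p z - Astar m a p y)) < sg * Astar m a p y)
    by (rewrite Rabs_mult, Hsg; lra).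
  pose proof (Rle_abs (- (sg * (Astar m a p z - Astar m a p y)))); rewrite Rabs_Ropp in *.
  rewrite <- (Rmult_1_l (Rabs (Astar m a p z))), <- Hsg, <- Rabs_mult.
  apply Rabs_pos_eq; lra.
Qed.

Lemma hessian_abs_Astar p y sg H : Om y -> Rabs sg = 1 -> 0 < sg * Astar m a p y ->
  has_hessian d (fun z => Rabs (Astar m a p z)) y H ->
  forall v, inR d v -> quad d H v = sg * quad d (D2Astar m d2a p y) v.
Proof.
  intros Hy Hsg Hpos [r [G [Hr [HG HH]]]] v Hv.
  destruct (abs_Astar_near p y sg Hy Hsg Hpos) as [rho [Hrho Hnear]].
  set (rho' := Rmin r rho / (norm2 d v + 1)).
  assert (Hrho' : 0 < rho')
    by (apply Rdiv_lt_0_compat; [apply Rmin_glb_lt | pose proof (norm2_nonneg d v)]; lra).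
  assert (Hline : forall t, Rabs t < rho' -> inR d (vadd y (vscal t v)) /\
            dist_pt d (vadd y (vscal t v)) y < r /\ dist_pt d (vadd y (vscal t v)) y < rho).
  { intros t Ht; pose proof (Rmin_l r rho); pose proof (Rmin_r r rho).
    destruct (line_point_near d y v (Rmin r rho) t (HOmsub y Hy) Hv
                ltac:(now apply Rmin_glb_lt) Ht) as [Hin Hd].
    repeat split; auto; lra. }
  assert (HGline : forall t, Rabs t < rho' ->
    dot d (G (vadd y (vscal t v))) v = sg * dot d (DAstar m da p (vadd y (vscal t v))) v).
  { intros t Ht; destruct (Hline t Ht) as [Hin [Hdr Hdrho]].
    apply (deriv_unique_local (fun u => Rabs (Astar m a p (vadd y (vscal u v))))
             (mult_real_fct sg (fun u => Astar m a p (vadd y (vscal u v)))) t).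
    - apply (frechet_line_deriv d (fun z => Rabs (Astar m a p z))); auto.
    - apply derivable_pt_lim_scal, Astar_line_deriv; auto; now apply Hnear.
    - exists (rho' - Rabs t); split; [lra|]; intros u Hu.
      assert (Hu' : Rabs u < rho').
      { pose proof (Rabs_triang (u - t) t); replace (u - t + t) with u in * by ring; lra. }
      destruct (Hline u Hu') as [Hin' [_ Hd']]; now apply Hnear. }
  replace (quad d H v) with (fsum d (fun j => dot d (H j) v * v j))
    by (unfold quad, dot at 1, matvec; apply fsum_ext; intros; unfold dot; ring).
  apply (deriv_unique_local (fun u => fsum d (fun j => G (vadd y (vscal u v)) j * v j))
           (mult_real_fct sg (fun u => dot d (DAstar m da p (vadd y (vscal u v))) v)) 0).
  - apply (deriv_fsum d (fun j u => G (vadd y (vscal u v)) j)); intros j Hj.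
    apply (frechet_line_deriv d (fun z => G z j)); rewrite ?line_0; auto.
  - apply derivable_pt_lim_scal.
    pose proof (DAstar_line_deriv p y v 0 ltac:(now rewrite line_0) Hv) as D2.
    now rewrite line_0 in D2.
  - exists rho'; split; auto; intros t Ht; rewrite Rminus_0_r in Ht.
    unfold mult_real_fct; rewrite <- HGline by auto; reflexivity.
Qed.

Section SourceCondition.

Variables (kappa kappa_grad kappa_hess : R).
Hypothesis Hkappa : is_upper_bound (fun r => exists q x, inR m q /\ norm2 m q <= 1 /\
  Om x /\ r = Rabs (Astar m a q x)) kappa.
Hypothesis Hkappa_grad : is_upper_bound (fun r => exists q x, inR m q /\ norm2 m q <= 1 /\
  Om x /\ r = norm2 d (DAstar m da q x)) kappa_grad.
Hypothesis Hkappa_hess : is_upper_bound (fun r => exists q x v, inR m q /\ norm2 m q <= 1 /\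
  Om x /\ inR d v /\ norm2 d v <= 1 /\ r = norm2 d (matvec d (D2Astar m d2a q x) v)) kappa_hess.

Variables (s : nat) (xi : nat -> pt) (qstar : pt) (tau0 gamma : R).
Hypothesis Hxi : forall i, (i < s)%nat -> Om (xi i).
Hypothesis Hqstar : inR m qstar.
Hypothesis Hfeas : forall x, Om x -> Rabs (Astar m a qstar x) <= 1.
Hypothesis Hpeak : forall i, (i < s)%nat -> Rabs (Astar m a qstar (xi i)) = 1.
Hypothesis Htau0 : 0 < tau0.
Hypothesis Hgamma : 0 < gamma.
Hypothesis Hnear : forall x, Om x ->
  (exists i, (i < s)%nat /\ dist_pt d x (xi i) <= tau0) ->
  gamma * tau0 ^ 2 / 2 <= Rabs (Astar m a qstar x) /\
  exists H, has_hessian d (fun y => Rabs (Astar m a qstar y)) x H /\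
    forall v, inR d v -> quad d H v <= - gamma * (norm2 d v) ^ 2.
Hypothesis Hfar : forall x, Om x ->
  (forall i, (i < s)%nat -> tau0 <= dist_pt d x (xi i)) ->
  Rabs (Astar m a qstar x) <= 1 - gamma * tau0 ^ 2 / 2.

Local Notation sigma i := (Astar m a qstar (xi i)).

Lemma margin_pos : 0 < gamma * tau0 ^ 2 / 2.
Proof. assert (0 < tau0 ^ 2) by (apply pow_lt; auto); nra. Qed.

Lemma source_sign_on_ball i y : (i < s)%nat -> Om y -> dist_pt d y (xi i) <= tau0 ->
  0 < sigma i * Astar m a qstar y.
Proof.
  intros Hi; apply Astar_sign_constant; auto.
  intros z Hz Hdz Hzero; pose proof margin_pos.
  destruct (Hnear z Hz) as [Hlow _]; [now exists i|].
  rewrite Hzero, Rabs_R0 in Hlow; lra.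
Qed.

Lemma source_hessian_on_ball i y v : (i < s)%nat -> Om y -> dist_pt d y (xi i) <= tau0 ->
  inR d v -> sigma i * quad d (D2Astar m d2a qstar y) v <= - gamma * (norm2 d v) ^ 2.
Proof.
  intros Hi Hy Hdy Hv.
  destruct (Hnear y Hy) as [_ [H [HH Hneg]]]; [now exists i|].
  rewrite <- (hessian_abs_Astar qstar y (sigma i) H); auto.
  now apply source_sign_on_ball.
Qed.

(* [xi i] maximizes [sigma i * A^* q*] over [Om], since [|A^* q*| <= 1]. *)
Lemma source_peak_first_order i y : (i < s)%nat -> Om y ->
  sigma i * dot d (DAstar m da qstar (xi i)) (vsub y (xi i)) <= 0.
Proof.
  intros Hi Hy; apply first_order_max; auto.
  intros z Hz; rewrite (unit_sign_sq _ (Hpeak i Hi)).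
  eapply Rle_trans; [apply unit_sign_le, Hpeak | apply Hfeas]; auto.
Qed.

Section Perturbation.

Variable p : pt.
Hypothesis Hp : inR m p.
Hypothesis Hcq : below_cq gamma tau0 kappa kappa_grad kappa_hess (norm2 m (vsub p qstar)).

Local Notation t := (norm2 m (vsub p qstar)).

Lemma inR_perturbation : inR m (vsub p qstar).
Proof. now apply inR_vsub. Qed.

Lemma perturbation_values x : Om x ->
  Rabs (Astar m a p x - Astar m a qstar x) < gamma * tau0 ^ 2 / 2.
Proof.
  intros Hx; rewrite <- Astar_sub.
  pose proof (Astar_bound m a Om kappa Hkappa _ x inR_perturbation Hx).
  destruct Hcq as [H1 _]; lra.
Qed.

Lemma perturbation_gradient x : Om x ->
  norm2 d (vsub (DAstar m da p x) (DAstar m da qstar x)) <= kappa_grad * t.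
Proof.
  intros Hx; rewrite <- DAstar_sub.
  exact (DAstar_bound d m da Om kappa_grad Hkappa_grad _ x inR_perturbation Hx).
Qed.

Lemma perturbation_hessian x v : Om x -> inR d v ->
  Rabs (quad d (D2Astar m d2a p x) v - quad d (D2Astar m d2a qstar x) v)
  <= kappa_hess * t * (norm2 d v * norm2 d v).
Proof.
  intros Hx Hv; rewrite <- quad_sub, <- D2Astar_sub.
  exact (D2Astar_quad_bound d m d2a Om kappa_hess Hkappa_hess _ x v inR_perturbation Hx Hv).
Qed.

Lemma perturbed_sign i : (i < s)%nat -> forall x, Om x -> dist_pt d x (xi i) <= tau0 ->
  0 < sigma i * Astar m a p x.
Proof.
  intros Hi x Hx Hdx.
  destruct (Hnear x Hx) as [Hlow _]; [now exists i|].
  assert (Hsig : sigma i * Astar m a qstar x = Rabs (Astar m a qstar x)).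
  { rewrite <- (Rabs_pos_eq (sigma i * Astar m a qstar x))
      by (apply Rlt_le, source_sign_on_ball; auto).
    now rewrite Rabs_mult, Hpeak, Rmult_1_l. }
  pose proof (unit_sign_le _ (Astar m a qstar x - Astar m a p x) (Hpeak i Hi)) as Hdiff.
  rewrite Rabs_minus_sym in Hdiff; pose proof (perturbation_values x Hx).
  replace (sigma i * Astar m a p x) with
    (sigma i * Astar m a qstar x - sigma i * (Astar m a qstar x - Astar m a p x)) by ring.
  lra.
Qed.

(* Every point of [X(p)] lies in the interior of one of the balls [B_i],
   since [|A^* p| < 1] outside them. *)
Lemma perturbed_peaks_near z : Xset d m a Om p z ->
  exists i, (i < s)%nat /\ dist_pt d z (xi i) < tau0.
Proof.
  intros [Hz [_ Hgt]]; apply NNPP; intro Hnone.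
  assert (Hall : forall i, (i < s)%nat -> tau0 <= dist_pt d z (xi i)).
  { intros i Hi; apply Rnot_lt_le; intro Hlt; apply Hnone; now exists i. }
  pose proof (Hfar z Hz Hall); pose proof (perturbation_values z Hz).
  pose proof (Rabs_triang (Astar m a qstar z) (Astar m a p z - Astar m a qstar z)).
  replace (Astar m a qstar z + (Astar m a p z - Astar m a qstar z))
    with (Astar m a p z) in * by ring.
  lra.
Qed.

(* Localization: a point [z] of [X(p)] is a critical point of [A^* p] in
   some [B_i]; along [xi i -> z] the directional derivative of [sigma i * A^* q*]
   starts [<= 0], decreases at rate [gamma |z - xi i|^2] and ends within
   [kappa_grad |p - q*| |z - xi i|] of [0]. *)
Lemma perturbed_localization z : Xset d m a Om p z ->
  exists i, (i < s)%nat /\ dist_pt d (xi i) z <= kappa_grad / gamma * t.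
Proof.
  intros Hz; pose proof Hz as [HzO [Hzmax _]].
  destruct (perturbed_peaks_near z Hz) as [i [Hi Hdz]]; exists i; split; auto.
  set (v := vsub z (xi i)).
  assert (Hv : inR d v) by (apply inR_vsub; apply HOmsub; auto).
  assert (Hcrit : dot d (DAstar m da p z) v = 0) by now apply grad_zero_at_local_max.
  destruct (grad_increment_mvt qstar (xi i) z (Hxi i Hi) HzO) as [c [Hc Hmvt]].
  fold v in Hmvt.
  assert (Hhess : sigma i * quad d (D2Astar m d2a qstar (seg (xi i) z c)) v
                  <= - gamma * (norm2 d v) ^ 2).
  { apply source_hessian_on_ball; auto; [apply HOmconv; auto; lra|].
    apply seg_in_ball; [rewrite dist_pt_refl | |]; lra. }
  pose proof (source_peak_first_order i z Hi HzO) as Hfirst; fold v in Hfirst.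
  assert (Hpert : - (sigma i * dot d (DAstar m da qstar z) v) <= kappa_grad * t * norm2 d v).
  { replace (- (sigma i * dot d (DAstar m da qstar z) v))
      with (sigma i * dot d (vsub (DAstar m da p z) (DAstar m da qstar z)) v)
      by (rewrite dot_sub_l, Hcrit; ring).
    eapply Rle_trans; [apply unit_sign_le, Hpeak; auto|].
    eapply Rle_trans; [apply cauchy_schwarz|].
    apply Rmult_le_compat_r; [apply norm2_nonneg | now apply perturbation_gradient]. }
  assert (Hkt : 0 <= kappa_grad * t)
    by (eapply Rle_trans; [apply norm2_nonneg | now apply (perturbation_gradient z)]).
  rewrite dist_pt_sym; unfold dist_pt; fold v.
  replace (kappa_grad / gamma * t) with (kappa_grad * t / gamma) by (field; lra).
  apply le_div_of_sq; auto using norm2_nonneg.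
  assert (Hq : sigma i * quad d (D2Astar m d2a qstar (seg (xi i) z c)) v
             = sigma i * dot d (DAstar m da qstar z) v
               - sigma i * dot d (DAstar m da qstar (xi i)) v) by (rewrite <- Hmvt; ring).
  simpl in Hhess; lra.
Qed.

(* Uniqueness: two critical points [x, y] of [A^* p] in [B_i] coincide, since
   the directional derivative along [x -> y] of [sigma i * A^* p] is strictly
   decreasing there but vanishes at both ends. *)
Lemma perturbed_unique i : (i < s)%nat -> forall x y,
  Xset d m a Om p x -> dist_pt d x (xi i) <= tau0 ->
  Xset d m a Om p y -> dist_pt d y (xi i) <= tau0 -> x = y.
Proof.
  intros Hi x y Hx Hdx Hy Hdy.
  pose proof Hx as [HxO [Hxmax _]]; pose proof Hy as [HyO [Hymax _]].
  set (v := vsub y x).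
  assert (Hv : inR d v) by (apply inR_vsub; apply HOmsub; auto).
  assert (Hv0 : norm2 d v = 0).
  { apply Rle_antisym; [apply Rnot_lt_le; intro Hpos | apply norm2_nonneg].
    destruct (grad_increment_mvt p x y HxO HyO) as [c [Hc Hmvt]]; fold v in Hmvt.
    rewrite (grad_zero_at_local_max p y v), (grad_zero_at_local_max p x v) in Hmvt; auto.
    assert (Hseg : Om (seg x y c)) by (apply HOmconv; auto; lra).
    assert (Hsegd : dist_pt d (seg x y c) (xi i) <= tau0) by (apply seg_in_ball; auto; lra).
    pose proof (source_hessian_on_ball i _ v Hi Hseg Hsegd Hv) as Hhess; simpl in Hhess.
    pose proof (unit_sign_le _ (quad d (D2Astar m d2a p (seg x y c)) v
                  - quad d (D2Astar m d2a qstar (seg x y c)) v) (Hpeak i Hi)).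
    pose proof (perturbation_hessian _ v Hseg Hv).
    destruct Hcq as [_ [_ Hkh]].
    assert (Hsq : 0 < norm2 d v * norm2 d v) by nra.
    assert (kappa_hess * t * (norm2 d v * norm2 d v) < gamma * (norm2 d v * norm2 d v)) by nra.
    rewrite <- Hmvt in *; lra. }
  apply functional_extensionality; intro j.
  pose proof (f_equal (fun w => w j) (norm2_eq0 d v Hv Hv0)) as Hj.
  unfold v, vsub in Hj; simpl in Hj; lra.
Qed.

End Perturbation.

End SourceCondition.

End DualCertificate.

Theorem mainTheorem7
  (d m : nat) (Omega : pt -> Prop)
  (HOmsub : subset_Rd d Omega) (HOmne : exists x, Omega x)
  (HOmopen : is_open d Omega) (HOmconv : is_convex Omega)
  (a : nat -> pt -> R) (da : nat -> pt -> pt) (d2a : nat -> pt -> nat -> pt)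
  (Ha : a_ok d m Omega a da d2a)
  (f : pt -> R) (L : R) (Hf : f_ok m f L)
  (kappa kappa_grad kappa_hess : R)
  (Hkappa : is_lub (fun r => exists q x, inR m q /\ norm2 m q <= 1 /\ Omega x /\
                      r = Rabs (Astar m a q x)) kappa)
  (Hkappa_grad : is_lub (fun r => exists q x, inR m q /\ norm2 m q <= 1 /\ Omega x /\
                      r = norm2 d (DAstar m da q x)) kappa_grad)
  (Hkappa_hess : is_lub (fun r => exists q x v, inR m q /\ norm2 m q <= 1 /\ Omega x /\
                      inR d v /\ norm2 d v <= 1 /\
                      r = norm2 d (matvec d (D2Astar m d2a q x) v)) kappa_hess)
  (* source condition *)
  (s : nat) (xi : nat -> pt) (alpha : nat -> R) (qstar : pt)
  (Hxi : forall i, (i < s)%nat -> Omega (xi i))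
  (Hxi_dist : forall i j, (i < s)%nat -> (j < s)%nat -> i <> j -> xi i <> xi j)
  (Halpha : forall i, (i < s)%nat -> alpha i <> 0)
  (Hqstar : dual_solution m f a Omega qstar)
  (Hsat : forall x, Omega x ->
            (Rabs (Astar m a qstar x) = 1 <-> exists i, (i < s)%nat /\ x = xi i))
  (tau0 gamma : R) (Htau0 : 0 < tau0) (Hgamma : 0 < gamma)
  (Hnear : forall x, Omega x ->
     (exists i, (i < s)%nat /\ dist_pt d x (xi i) <= tau0) ->
     gamma * tau0 ^ 2 / 2 <= Rabs (Astar m a qstar x) /\
     exists H, has_hessian d (fun y => Rabs (Astar m a qstar y)) x H /\
       forall v, inR d v -> quad d H v <= - gamma * (norm2 d v) ^ 2)
  (Hfar : forall x, Omega x ->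
     (forall i, (i < s)%nat -> tau0 <= dist_pt d x (xi i)) ->
     Rabs (Astar m a qstar x) <= 1 - gamma * tau0 ^ 2 / 2)
  (* exchange algorithm *)
  (Omega0 : pt -> Prop) (HOm0 : forall x, Omega0 x -> Omega x)
  (Oseq : nat -> pt -> Prop) (q : nat -> pt)
  (Hrun : exchange_run d m f a Omega Omega0 Oseq q)
  (k : nat)
  (Hk : below_cq gamma tau0 kappa kappa_grad kappa_hess (norm2 m (vsub (q k) qstar))) :
  (* dist(xi, X_k) <= kappa_grad/gamma * ||q_k - q*|| *)
  (forall z, Xset d m a Omega (q k) z ->
     exists i, (i < s)%nat /\
       dist_pt d (xi i) z <= kappa_grad / gamma * norm2 m (vsub (q k) qstar)) /\
  (forall i, (i < s)%nat ->
     (forall x y, Xset d m a Omega (q k) x -> dist_pt d x (xi i) <= tau0 ->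
                  Xset d m a Omega (q k) y -> dist_pt d y (xi i) <= tau0 -> x = y) /\
     (forall x, Omega x -> dist_pt d x (xi i) <= tau0 ->
        (0 < Astar m a qstar (xi i) /\ 0 < Astar m a (q k) x) \/
        (Astar m a qstar (xi i) < 0 /\ Astar m a (q k) x < 0))).
Proof.
  destruct Hrun as [_ [_ Hdual]]; destruct (Hdual k) as [[Hqk _] _].
  destruct Hqstar as [[Hqs Hfeas] _].
  assert (Hpeak : forall i, (i < s)%nat -> Rabs (Astar m a qstar (xi i)) = 1)
    by (intros i Hi; apply (Hsat (xi i) (Hxi i Hi)); now exists i).
  pose proof (perturbed_localization d m Omega a da d2a Ha HOmsub HOmopen HOmconv
    kappa kappa_grad kappa_hess (proj1 Hkappa) (proj1 Hkappa_grad)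
    s xi qstar tau0 gamma Hxi Hqs Hfeas Hpeak Htau0 Hgamma Hnear Hfar (q k) Hqk Hk)
    as Hlocalization.
  pose proof (perturbed_unique d m Omega a da d2a Ha HOmsub HOmopen HOmconv
    kappa kappa_grad kappa_hess (proj1 Hkappa_hess)
    s xi qstar tau0 gamma Hxi Hqs Hpeak Htau0 Hgamma Hnear (q k) Hqk Hk)
    as Hunique.
  pose proof (perturbed_sign d m Omega a da d2a Ha HOmsub HOmconv
    kappa kappa_grad kappa_hess (proj1 Hkappa)
    s xi qstar tau0 gamma Hxi Hqs Hpeak Htau0 Hgamma Hnear (q k) Hqk Hk)
    as Hsign.
  split; [exact Hlocalization|].
  intros i Hi; split; [exact (Hunique i Hi)|].
  intros x Hx Hdx; apply pos_product_cases; now apply (Hsign i Hi x).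
Qed.
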